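(* Let $q=2^m$ and let $\mathbf{H}$ be a binary $r\times N$ matrix in which every column contains exactly two entries equal to $1$, with Tanner graph $\mathcal{G}$. For every check node $i$ choose a nonzero $a_i\in\mathbb{F}_q$, and for every edge $(i,j)$ of $\mathcal{G}$ (check $i$, variable $j$) choose a nonzero $b_{ij}\in\mathbb{F}_q$. For each variable node $j$, with $i$ and $k$ the two check nodes adjacent to $j$, define the labels $x_{ij}=a_i b_{ij}b_{kj}$ and $x_{kj}=a_k b_{kj}b_{ij}$. Then for every cycle $\mathcal{C}$ of $\mathcal{G}$, the product $\Pi(\mathcal{C})$ of the labels over $\mathcal{C}$ equals $1$.
   Context: The Tanner graph of an $r\times N$ matrix $(H_{ij})$ is the bipartite graph with variable nodes indexed by columns, check nodes indexed by rows, and an edge between check $i$ and variable $j$ iff $H_{ij}\neq0$; here each edge $(i,j)$ carries the label $x_{ij}\in\mathbb{F}_q\setminus\{0\}$. For a cycle $\mathcal{C}=v_1,c_1,v_2,c_2,\dots,v_k,c_k,v_1$ (alternating variable nodes $v_t$ and check nodes $c_t$), the product over the cycle is $\Pi(\mathcal{C})=\prod_{t=1}^{k} x_{c_t v_{t+1}}\,x_{c_t v_t}^{-1}$ (indices of $v$ mod $k$), i.e. each label is raised to the power $1$ for check-to-variable edges and $-1$ for variable-to-check edges along the traversal. *)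

From HB Require Import structures.
From mathcomp Require Import all_boot all_order all_algebra all_field.
Set Implicit Arguments. Unset Strict Implicit. Unset Printing Implicit Defensive.
Import GRing.Theory.
Local Open Scope ring_scope.

Definition tedge (r N : nat) (H : 'M['F_2]_(r, N)) (i : 'I_r) (j : 'I_N) : bool :=
  H i j != 0.

(* For a column j with exactly two nonzero entries, the check node adjacent
   to j other than i (defaults to i if there is none). *)
Definition other_check (r N : nat) (H : 'M['F_2]_(r, N)) (i : 'I_r) (j : 'I_N)
  : 'I_r :=
  odflt i [pick k | tedge H k j && (k != i)].

Definition label (F : fieldType) (r N : nat) (H : 'M['F_2]_(r, N))
  (a : 'I_r -> F) (b : 'I_r -> 'I_N -> F) (i : 'I_r) (j : 'I_N) : F :=
  a i * b i j * b (other_check H i j) j.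

(* A cycle v_0,c_0,v_1,c_1,...,v_{k-1},c_{k-1},v_0 in the Tanner graph:
   k >= 2, distinct variable nodes, distinct check nodes, c_t adjacent to
   v_t and to v_{t+1 mod k}. *)
Definition is_cycle (r N : nat) (H : 'M['F_2]_(r, N)) (k : nat)
  (v : 'I_k -> 'I_N) (c : 'I_k -> 'I_r) : Prop :=
  [/\ (2 <= k)%N, injective v, injective c &
      forall t : 'I_k, tedge H (c t) (v t) && tedge H (c t) (v (ordS t))].

Definition cycle_prod (F : fieldType) (N r k : nat) (x : 'I_r -> 'I_N -> F)
  (v : 'I_k -> 'I_N) (c : 'I_k -> 'I_r) : F :=
  \prod_(t < k) (x (c t) (v (ordS t)) * (x (c t) (v t))^-1).

From HB Require Import structures.
From mathcomp Require Import all_boot all_order all_algebra all_field.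
Local Open Scope ring_scope.
Import GRing.Theory.

Set Implicit Arguments.
Unset Strict Implicit.
Unset Printing Implicit Defensive.

(* Since each column has exactly two checks, for an edge (i, j) the product
   [b i j * b k j] over the two checks i, k of j does not depend on which of
   them is i.  Hence [x_ij = a_i * w_j] with [w_j] depending on j alone, each
   factor of the cycle product is [w_(v_(t+1)) / w_(v_t)], and the product
   telescopes.  Neither the characteristic of the field nor the simplicity of
   the cycle plays any role. *)

Lemma F2_neq0 (z : 'F_2) : (z != 0) = (z == 1).
Proof. by case: z => [[|[|n]] //]. Qed.

Section OtherCheck.

Variables (r N : nat) (H : 'M['F_2]_(r, N)).

Lemma tedge_other_check i j : tedge H i j -> tedge H (other_check H i j) j.
Proof. by rewrite /other_check; case: pickP => [k /andP[]|]. Qed.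

Hypothesis hcol : forall j : 'I_N, #|[set i : 'I_r | H i j == 1]| = 2%N.

Lemma other_check_eq i k j :
  tedge H i j -> tedge H k j -> k != i -> other_check H i j = k.
Proof.
move=> hi hk ki; rewrite /other_check.
have /cards2P [x [y [xy hS]]] : #|[set i : 'I_r | H i j == 1]| == 2%N
  by rewrite hcol.
have adj z : tedge H z j -> (z == x) || (z == y).
  by move=> hz; rewrite -in_set2 -hS inE -F2_neq0.
case: pickP => [k' /andP [hk' k'i] | /(_ k)]; last by rewrite hk ki.
move: (adj _ hi) (adj _ hk) (adj _ hk') ki k'i.
by case/orP=> /eqP-> ; case/orP=> /eqP-> ; case/orP=> /eqP->;
  rewrite ?eqxx // eq_sym ?(negbTE xy).
Qed.

Lemma other_check_weight_sym (R : comPzRingType) (b : 'I_r -> 'I_N -> R) i k j :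
  tedge H i j -> tedge H k j ->
  b i j * b (other_check H i j) j = b k j * b (other_check H k j) j.
Proof.
move=> hi hk; have [-> // | ki] := eqVneq k i.
by rewrite (other_check_eq hi hk ki) (other_check_eq hk hi) 1?eq_sym // mulrC.
Qed.

End OtherCheck.

Lemma prod_ordS_ratio (F : fieldType) k (f : 'I_k -> F) :
  (forall t, f t != 0) -> \prod_(t < k) (f (ordS t) / f t) = 1.
Proof.
move=> fnz; rewrite big_split /= prodfV.
rewrite [X in _ / X](reindex_inj (@ordS_inj k)) /= divff //.
by apply/prodf_neq0 => t _.
Qed.

Theorem mainTheorem3 (F : finFieldType) (m : nat) (hq : #|F| = (2 ^ m)%N)
  (r N : nat) (H : 'M['F_2]_(r, N))
  (hcol : forall j : 'I_N, #|[set i : 'I_r | H i j == 1]| = 2%N)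
  (a : 'I_r -> F) (ha : forall i, a i != 0)
  (b : 'I_r -> 'I_N -> F) (hb : forall i j, tedge H i j -> b i j != 0) :
  forall (k : nat) (v : 'I_k -> 'I_N) (c : 'I_k -> 'I_r),
    is_cycle H v c -> cycle_prod (label H a b) v c = 1.
Proof.
move=> k v c [_ _ _ hedge].
pose w t := b (c t) (v t) * b (other_check H (c t) (v t)) (v t).
have wnz t : w t != 0.
  have /andP[e _] := hedge t.
  by rewrite mulf_neq0 // hb // tedge_other_check.
rewrite /cycle_prod -[RHS](prod_ordS_ratio wnz); apply: eq_bigr => t _.
have /andP[_ e2] := hedge t; have /andP[e3 _] := hedge (ordS t).
have lab i j : label H a b i j = a i * (b i j * b (other_check H i j) j).
  by rewrite /label mulrA.
rewrite !lab (other_check_weight_sym hcol b e2 e3) -/(w t) -/(w (ordS t)).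
by rewrite invfM mulrACA divff ?mul1r.
Qed.
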